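(* Let $(\mathcal{M},g)$ be a globally hyperbolic Lorentzian spacetime and let $\{\Sigma_t\}_{t\in\mathbb{R}}$ be a foliation of $\mathcal{M}$ into spacelike Cauchy hypersurfaces. Let $\mathcal{H}$ be a Hilbert space, $\mathcal{D}\subset\mathcal{H}$ a dense subset, and let $\hat\psi:\mathcal{M}\to\mathcal{L}(\mathcal{D},\mathcal{H})$ and $\hat\pi:\mathcal{M}\to\mathcal{L}(\mathcal{D},\mathcal{H})$ be maps such that (1) $\hat\psi(x)\mathcal{D}\subset\mathcal{D}$ and $\hat\psi(x)^\dagger\mathcal{D}\subset\mathcal{D}$ for all $x\in\mathcal{M}$; (2) $\hat\pi(x)\mathcal{D}\subset\mathcal{D}$ and $\hat\pi(x)^\dagger\mathcal{D}\subset\mathcal{D}$ for all $x\in\mathcal{M}$; (3) for every $t\in\mathbb{R}$ the restriction $\hat\pi|_{\Sigma_t}$ is weakly continuous, i.e. for all $\ket{\phi},\ket{\psi}\in\mathcal{D}$ the map $x\in\Sigma_t\mapsto\bra{\phi}\hat\pi(x)\ket{\psi}$ is continuous. Then for every $t\in\mathbb{R}$ and every $x\in\Sigma_t$: $[\hat\psi(x),\hat\pi(y)]=0$ for all $y\in\Sigma_t\setminus\{x\}$ if and only if $[\hat\psi(x),\hat\pi(y)]=0$ for all $y\in\Sigma_t$; and $\{\hat\psi(x),\hat\pi(y)\}=0$ for all $y\in\Sigma_t\setminus\{x\}$ if and only if $\{\hat\psi(x),\hat\pi(y)\}=0$ for all $y\in\Sigma_t$, where all (anti)commutators are understood as operators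 on $\mathcal{D}$.
   Context: $\mathcal{L}(\mathcal{D},\mathcal{H})$ denotes the linear maps from the dense subspace $\mathcal{D}\subset\mathcal{H}$ into $\mathcal{H}$. $[A,B]=AB-BA$ and $\{A,B\}=AB+BA$. *)

From HB Require Import structures.
From mathcomp Require Import all_boot all_order all_algebra.
From mathcomp Require Import complex.
From mathcomp Require Import all_classical all_reals all_analysis.
Import numFieldTopology.Exports numFieldNormedType.Exports.
Import Order.TTheory GRing.Theory Num.Theory.

Set Implicit Arguments.
Unset Strict Implicit.
Unset Printing Implicit Defensive.

Local Open Scope ring_scope.
Local Open Scope classical_set_scope.
Local Open Scope complex_scope.

Definition Cc (R : realType) : numClosedFieldType := R[i].

(* ip is a (physicists') inner product on H: conjugate-linear in the first
   argument, linear in the second, hermitian and positive definite. *)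
Definition is_inner_product (R : realType) (H : lmodType (Cc R))
    (ip : H -> H -> Cc R) : Prop :=
  [/\ (forall (a : Cc R) (u v w : H), ip u (a *: v + w) = a * ip u v + ip u w),
      (forall u v : H, ip u v = (ip v u)^*),
      (forall u : H, 0 <= ip u u) &
      (forall u : H, ip u u = 0 -> u = 0)].

Definition sqnorm (R : realType) (H : lmodType (Cc R)) (ip : H -> H -> Cc R)
    (u : H) : Cc R := ip u u.

Definition ip_complete (R : realType) (H : lmodType (Cc R))
    (ip : H -> H -> Cc R) : Prop :=
  forall s : nat -> H,
    (forall e : R, 0 < e -> exists N : nat, forall m n : nat,
        (N <= m)%N -> (N <= n)%N -> `|sqnorm ip (s m - s n)| < e%:C) ->
    exists l : H, forall e : R, 0 < e -> exists N : nat, forall n : nat,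
        (N <= n)%N -> `|sqnorm ip (s n - l)| < e%:C.

Definition is_hilbert_space (R : realType) (H : lmodType (Cc R))
    (ip : H -> H -> Cc R) : Prop :=
  is_inner_product ip /\ ip_complete ip.

Definition dense_subspace (R : realType) (H : lmodType (Cc R))
    (ip : H -> H -> Cc R) (D : set H) : Prop :=
  [/\ D 0,
      (forall (a : Cc R) (u v : H), D u -> D v -> D (a *: u + v)) &
      (forall (h : H) (e : R), 0 < e ->
          exists2 d : H, D d & `|sqnorm ip (h - d)| < e%:C)].

(* A : H -> H represents an element of L(D,H): only its values on D matter,
   and it is linear there. *)
Definition linear_on (R : realType) (H : lmodType (Cc R)) (D : set H)
    (A : H -> H) : Prop :=
  forall (a : Cc R) (u v : H), D u -> D v -> A (a *: u + v) = a *: A u + A v.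

Definition maps_into (T : Type) (D : set T) (A : T -> T) : Prop :=
  forall u, D u -> D (A u).

(* A^† D ⊂ D, for A densely defined on D: every phi in D lies in the domain
   of the adjoint A^† (i.e. there is eta with <eta|u> = <phi|A u> for all u
   in D, and then A^† phi = eta), and A^† phi lies in D. *)
Definition adjoint_maps_into (R : realType) (H : lmodType (Cc R))
    (ip : H -> H -> Cc R) (D : set H) (A : H -> H) : Prop :=
  forall phi : H, D phi ->
    exists2 eta : H, D eta & forall u : H, D u -> ip eta u = ip phi (A u).

Definition commutator (R : realType) (H : lmodType (Cc R)) (A B : H -> H)
    (v : H) : H := A (B v) - B (A v).
Definition anticommutator (R : realType) (H : lmodType (Cc R)) (A B : H -> H)
    (v : H) : H := A (B v) + B (A v).
Definition commutator_vanishes_on (R : realType) (H : lmodType (Cc R))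
    (D : set H) (A B : H -> H) : Prop :=
  forall v : H, D v -> commutator A B v = 0.
Definition anticommutator_vanishes_on (R : realType) (H : lmodType (Cc R))
    (D : set H) (A B : H -> H) : Prop :=
  forall v : H, D v -> anticommutator A B v = 0.

Definition chart (R : realType) (M : topologicalType) (m : nat)
    (U : set M) (f : M -> 'rV[R]_m) : Prop :=
  open U /\ open (f @` U) /\
  exists g : 'rV[R]_m -> M,
    [/\ (forall x, U x -> g (f x) = x),
        (forall v, (f @` U) v -> f (g v) = v),
        {within U, continuous f} &
        {within f @` U, continuous g}].

Definition topological_manifold (R : realType) (M : topologicalType) (m : nat)
    : Prop :=
  hausdorff_space M /\
  forall x : M, exists U : set M, exists f : M -> 'rV[R]_m.+1,
      U x /\ chart U f.

Definition embedded_hypersurface (R : realType) (M : topologicalType) (m : nat)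
    (S : set M) : Prop :=
  forall x : M, S x -> exists U : set M, exists f : M -> 'rV[R]_m.+1,
    [/\ U x, chart U f &
        f @` (U `&` S) = (f @` U) `&` [set v | v ord0 ord_max = 0]].

Definition hypersurface_foliation (R : realType) (M : topologicalType)
    (m : nat) (Sigma : R -> set M) : Prop :=
  [/\ (forall x : M, exists t : R, Sigma t x),
      (forall s t : R, s != t -> Sigma s `&` Sigma t = set0) &
      (forall t : R, embedded_hypersurface R m (Sigma t))].

From HB Require Import structures.
From mathcomp Require Import all_boot all_order all_algebra.
From mathcomp Require Import complex.
From mathcomp Require Import all_classical all_reals all_analysis.
Import numFieldTopology.Exports numFieldNormedType.Exports.
Import Order.TTheory GRing.Theory Num.Theory.
Local Open Scope ring_scope.
Local Open Scope classical_set_scope.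

Set Implicit Arguments.
Unset Strict Implicit.
Unset Printing Implicit Defensive.

(* Every point x of a leaf Sigma_t is a limit point of Sigma_t: in a slice
   chart the leaf is a hyperplane of R^(n+2), which has positive dimension.
   For d, v in D the matrix element
     <d|[psi(x), pi(y)] v> = <psi(x)^+ d|pi(y) v> - <d|pi(y) psi(x) v>
   is a continuous function of y on Sigma_t, because psi(x) and psi(x)^+
   preserve D and pi is weakly continuous on Sigma_t. If it vanishes on
   Sigma_t minus {x}, it vanishes at the limit point x as well; as D is dense,
   [psi(x), pi(x)] v = 0. The anticommutator is handled identically. *)

Lemma within_continuous_limit_point_eq (T U : topologicalType) (S : set T)
    (g : T -> U) (x : T) (c : U) :
  accessible_space U -> {within S, continuous g} -> S x -> limit_point S x ->
  (forall y, S y -> y != x -> g y = c) -> g x = c.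
Proof.
move=> T1U /subspace_continuousP cg Sx xS gc.
apply/eqP/negPn/negP => gxc.
have [A [oA Agx cA]] := T1U _ _ gxc.
have /cg : nbhs (g x) A by apply: open_nbhs_nbhs; split => //; exact/set_mem.
move=> /(_ Sx) /xS[y [yx Sy /(_ Sy)]] /=.
by move: cA; rewrite /from_subspace gc // inE => nAc /nAc.
Qed.

Lemma limit_pointI_nbhs (T : topologicalType) (A V : set T) (x : T) :
  nbhs x V -> limit_point A x -> limit_point (A `&` V) x.
Proof.
move=> Vx xA W Wx; have [y [yx Ay [Wy Vy]]] := xA _ (filterI Wx Vx).
by exists y.
Qed.

Lemma limit_point_hyperplane (R : realType) (m : nat) (v : 'rV[R]_m.+2) :
  v ord0 ord_max = 0 -> limit_point [set w : 'rV[R]_m.+2 | w ord0 ord_max = 0] v.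
Proof.
move=> v0 W Wv.
(* Moving along ord0 stays in the hyperplane since ord0 != ord_max in 'I_m.+2. *)
pose e : 'rV[R]_m.+2 := delta_mx 0 ord0.
have ve : v + s *: e @[s --> (0 : R)] --> v + 0 *: e.
  by apply: cvgD; [exact: cvg_cst | apply: cvgZl; exact: cvg_id].
rewrite scale0r addr0 in ve.
have : \forall s \near (0 : R)^', s != 0 /\ W (v + s *: e).
  near=> s; split; first by near: s; exact: nbhs_dnbhs_neq.
  by near: s; apply: nbhs_dnbhs; exact: ve.
move=> /filter_ex[s [s0 Ws]]; exists (v + s *: e); split => //=.
- rewrite -subr_eq0 addrAC subrr add0r scaler_eq0 (negbTE s0) /=.
  by apply/eqP => /matrixP/(_ 0 ord0); rewrite !mxE /= => /eqP; rewrite oner_eq0.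
- by rewrite !mxE v0 /= mulr0 addr0.
Unshelve. all: by end_near.
Qed.

Lemma limit_point_chart (T V : topologicalType) (U S : set T) (f : T -> V)
    (g : V -> T) (x : T) :
  U x -> (forall y, U y -> g (f y) = y) -> {within f @` U, continuous g} ->
  limit_point (f @` (U `&` S)) (f x) -> limit_point S x.
Proof.
move=> Ux gf /subspace_continuousP cg fxS W Wx.
have /(_ W) := cg (f x) (ex_intro2 _ _ x Ux erefl).
rewrite /from_subspace gf // => /(_ Wx) /fxS.
move=> [v [fyx [y [Uy Sy] fyv] Wy]]; subst v.
move: Wy => /(_ (ex_intro2 _ _ y Uy erefl)); rewrite /preimage /= gf // => Wy.
exists y; split => //.
by apply: contra_neq fyx => ->.
Qed.

Lemma embedded_hypersurface_limit_point (R : realType) (M : topologicalType)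
    (m : nat) (S : set M) (x : M) :
  embedded_hypersurface R m.+1 S -> S x -> limit_point S x.
Proof.
move=> hS Sx; have [U [f [Ux [_ [ofU [g [gf _ _ cg]]]] sliceS]]] := hS x Sx.
apply: (limit_point_chart Ux gf cg); rewrite sliceS setIC.
apply: limit_pointI_nbhs; first by apply: open_nbhs_nbhs; split => //; exists x.
apply: limit_point_hyperplane.
have : (f @` (U `&` S)) (f x) by exists x.
by rewrite sliceS => -[].
Qed.

Section InnerProduct.
Local Open Scope complex_scope.
Variables (R : realType) (H : lmodType (Cc R)) (ip : H -> H -> Cc R).
Hypothesis hip : is_inner_product ip.

Lemma ipDr u v w : ip u (v + w) = ip u v + ip u w.
Proof. by case: hip => lin _ _ _; rewrite -[v]scale1r lin mul1r scale1r. Qed.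

Lemma ipBr u v w : ip u (v - w) = ip u v - ip u w.
Proof. by case: hip => lin _ _ _; rewrite addrC -scaleN1r lin mulN1r addrC. Qed.

Lemma ipr0 u : ip u 0 = 0.
Proof. by rewrite -(subrr 0) ipBr subrr. Qed.

Lemma ipBl u v w : ip (u - v) w = ip u w - ip v w.
Proof. by case: hip => _ herm _ _; rewrite herm ipBr rmorphB /= -!herm. Qed.

Lemma dense_orthogonal_eq0 (D : set H) w :
  dense_subspace ip D -> (forall d, D d -> ip d w = 0) -> w = 0.
Proof.
move=> [_ _ dens] orth; case: hip => _ herm pos def; apply: def.
have [a wwE] : exists a : R, ip w w = a%:C.
  move: (pos w); case: (ip w w) => a b; rewrite lecE /= => /andP[/eqP b0 _].
  by exists a; rewrite b0.
have a_ge0 : 0 <= a by rewrite -lecR -wwE.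
have [a0|a_neq0] := eqVneq a 0; first by rewrite wwE a0.
have [d Dd] : exists2 d, D d & `|sqnorm ip (w - d)| < a%:C.
  by apply: dens; rewrite lt_neqAle eq_sym a_neq0.
have -> : sqnorm ip (w - d) = ip w w + ip d d.
  rewrite /sqnorm ipBl !ipBr (orth d Dd) (herm w d) (orth d Dd).
  by rewrite raddf0 !subr0 sub0r opprK.
by rewrite ger0_norm ?addr_ge0 // wwE gtrDl => /(le_lt_trans (pos d)); rewrite ltxx.
Qed.

End InnerProduct.

Section WeakContinuity.
Variables (R : realType) (H : lmodType (Cc R)) (ip : H -> H -> Cc R).
Variables (D : set H) (T : topologicalType) (S : set T).
Hypothesis hip : is_inner_product ip.

Lemma weakly_continuous_eq0_at_limit_point (F : T -> H) (x : T) :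
  dense_subspace ip D ->
  (forall d, D d -> {within S, continuous (fun y => ip d (F y))}) ->
  S x -> limit_point S x -> (forall y, S y -> y != x -> F y = 0) -> F x = 0.
Proof.
move=> hD cF Sx xS F0; apply: (dense_orthogonal_eq0 hip hD) => d Dd.
apply: (within_continuous_limit_point_eq _ (cF d Dd)) => // [|y Sy yx].
  exact/hausdorff_accessible/norm_hausdorff.
by rewrite F0 // ipr0.
Qed.

Variables (A : H -> H) (B : T -> H -> H).
Hypotheses (A_D : maps_into D A) (A_adj : adjoint_maps_into ip D A).
Hypothesis B_D : forall y, maps_into D (B y).
Hypothesis B_weak : forall phi chi, D phi -> D chi ->
  {within S, continuous (fun y => ip phi (B y chi))}.

Lemma commutator_weakly_continuous d v : D d -> D v ->
  {within S, continuous (fun y => ip d (commutator A (B y) v))}.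
Proof.
move=> Dd Dv; have [eta Deta etaE] := A_adj Dd.
have -> : (fun y => ip d (commutator A (B y) v)) =
          (fun y => ip eta (B y v)) - (fun y => ip d (B y (A v))).
  by apply/funext => y; rewrite /commutator ipBr // -etaE //; exact: B_D.
exact: within_continuousB (B_weak Deta Dv) (B_weak Dd (A_D Dv)).
Qed.

Lemma anticommutator_weakly_continuous d v : D d -> D v ->
  {within S, continuous (fun y => ip d (anticommutator A (B y) v))}.
Proof.
move=> Dd Dv; have [eta Deta etaE] := A_adj Dd.
have -> : (fun y => ip d (anticommutator A (B y) v)) =
          (fun y => ip eta (B y v)) + (fun y => ip d (B y (A v))).
  by apply/funext => y; rewrite /anticommutator ipDr // -etaE //; exact: B_D.
exact: within_continuousD (B_weak Deta Dv) (B_weak Dd (A_D Dv)).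
Qed.

Lemma weakly_continuous_vanish_off_limit_point (C : T -> H -> H) (x : T) :
  dense_subspace ip D -> S x -> limit_point S x ->
  (forall d v, D d -> D v -> {within S, continuous (fun y => ip d (C y v))}) ->
  (forall y, S y -> y <> x -> forall v, D v -> C y v = 0) <->
  (forall y, S y -> forall v, D v -> C y v = 0).
Proof.
move=> hD Sx xS cC; split=> [C0 y Sy v Dv | C0 y Sy _]; last exact: C0.
have [->|/eqP yx] := eqVneq y x; last exact: C0.
apply: (weakly_continuous_eq0_at_limit_point hD (fun d Dd => cC d v Dd Dv)) => //.
by move=> z Sz /eqP zx; exact: C0.
Qed.

End WeakContinuity.

Theorem theorem1
  (R : realType)
  (* spacetime of dimension n.+2 >= 2, foliated by hypersurfaces Sigma t *)
  (M : topologicalType) (n : nat) (Sigma : R -> set M)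
  (hM : topological_manifold R M n.+1)
  (hSigma : hypersurface_foliation n.+1 Sigma)
  (* Hilbert space H with inner product ip, dense subspace D *)
  (H : lmodType (Cc R)) (ip : H -> H -> Cc R) (D : set H)
  (hH : is_hilbert_space ip) (hD : dense_subspace ip D)
  (* field operators psi, pi : M -> L(D,H) *)
  (psi pi : M -> H -> H)
  (hpsi_lin : forall x : M, linear_on D (psi x))
  (hpi_lin : forall x : M, linear_on D (pi x))
  (h1 : forall x : M, maps_into D (psi x) /\ adjoint_maps_into ip D (psi x))
  (h2 : forall x : M, maps_into D (pi x) /\ adjoint_maps_into ip D (pi x))
  (h3 : forall (t : R) (phi chi : H), D phi -> D chi ->
          {within Sigma t, continuous (fun y : M => ip phi (pi y chi))}) :
  forall (t : R) (x : M), Sigma t x ->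
    ((forall y : M, Sigma t y -> y <> x ->
        commutator_vanishes_on D (psi x) (pi y)) <->
     (forall y : M, Sigma t y -> commutator_vanishes_on D (psi x) (pi y)))
    /\
    ((forall y : M, Sigma t y -> y <> x ->
        anticommutator_vanishes_on D (psi x) (pi y)) <->
     (forall y : M, Sigma t y -> anticommutator_vanishes_on D (psi x) (pi y))).
Proof.
move=> t x Sx; have [hip _] := hH; have [psiD psi_adj] := h1 x.
have piD y : maps_into D (pi y) by case: (h2 y).
have xS : limit_point (Sigma t) x.
  by have [_ _ hS] := hSigma; exact: embedded_hypersurface_limit_point (hS t) Sx.
split; [apply: (weakly_continuous_vanish_off_limit_point
                  (C := fun y => commutator (psi x) (pi y)) hip hD Sx xS) |
        apply: (weakly_continuous_vanish_off_limit_point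
                  (C := fun y => anticommutator (psi x) (pi y)) hip hD Sx xS)]
  => d v Dd Dv.
- exact: (commutator_weakly_continuous hip psiD psi_adj piD (h3 t)) Dd Dv.
- exact: (anticommutator_weakly_continuous hip psiD psi_adj piD (h3 t)) Dd Dv.
Qed.
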